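(* Let $(\mathcal{X},\rho)$ be a metric space, let $(x_1,y_1),\dots,(x_n,y_n)\in\mathcal{X}\times\{-1,1\}$, and let $L>0$. Define $k(L)$ as the minimum, over all $f:\mathcal{X}\to\mathbb{R}$ with Lipschitz constant at most $L$, of $|\{i\in[n]: y_if(x_i)<1\}|$. Let $G_L$ be the bipartite graph with vertex set $[n]$, parts $\{i:y_i=1\}$ and $\{i:y_i=-1\}$, and an edge $\{i,j\}$ whenever $y_i=1$, $y_j=-1$ and $\rho(x_i,x_j)<2/L$. Then $k(L)$ equals the size of a minimum vertex cover of $G_L$ (equivalently, by König's theorem, the size of a maximum matching of $G_L$).
   Context: The Lipschitz constant of $f$ is the smallest $L\ge0$ with $|f(x)-f(x')|\le L\rho(x,x')$ for all $x,x'$. A vertex cover of a graph is a set of vertices meeting every edge. *)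

From Stdlib Require Import Reals List.
Import ListNotations.
Open Scope R_scope.

Definition is_metric {X : Type} (rho : X -> X -> R) : Prop :=
  (forall x y, 0 <= rho x y) /\
  (forall x y, rho x y = 0 <-> x = y) /\
  (forall x y, rho x y = rho y x) /\
  (forall x y z, rho x z <= rho x y + rho y z).

Definition lipschitz_le {X : Type} (rho : X -> X -> R) (L : R) (f : X -> R) : Prop :=
  forall x x', Rabs (f x - f x') <= L * rho x x'.

(* |{ i in [n] : y_i f(x_i) < 1 }|, indices 0..n-1 *)
Definition margin_errors {X : Type} (n : nat) (x : nat -> X) (y : nat -> R)
  (f : X -> R) : nat :=
  length (filter (fun i => if Rlt_dec (y i * f (x i)) 1 then true else false)
                 (seq 0 n)).

Definition GL_edge {X : Type} (rho : X -> X -> R) (L : R) (x : nat -> X)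
  (y : nat -> R) (i j : nat) : Prop :=
  y i = 1 /\ y j = -1 /\ rho (x i) (x j) < 2 / L.

Definition is_vertex_cover {X : Type} (rho : X -> X -> R) (L : R) (n : nat)
  (x : nat -> X) (y : nat -> R) (C : list nat) : Prop :=
  NoDup C /\ (forall i, In i C -> (i < n)%nat) /\
  (forall i j, (i < n)%nat -> (j < n)%nat -> GL_edge rho L x y i j ->
     In i C \/ In j C).

Definition is_min_nat (P : nat -> Prop) (m : nat) : Prop :=
  P m /\ forall k, P k -> (m <= k)%nat.

From Stdlib Require Import Reals List Lra Lia Classical.
Open Scope R_scope.

(* Write E(f) for the indices i with y_i f(x_i) < 1, so that
   margin_errors counts E(f).
   (1) If f is L-Lipschitz, E(f) is a vertex cover of G_L: for an edge
       {i,j} with y_i = 1, y_j = -1, avoiding errors at both ends forces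
       f(x_i) - f(x_j) >= 2, hence rho(x_i,x_j) >= 2/L.  So k(L) is at least
       the minimum cover size.
   (2) Conversely, from a vertex cover C build the L-Lipschitz "bump"
         f_C(z) = max(-1, max_{p in P} (1 - L rho(z, x_p))),
       where P is the set of positive points outside C.  Then f_C >= 1 on P,
       and f_C <= -1 at every negative point outside C, because such a point
       has no edge to P and so lies at distance >= 2/L from all of P.
       Hence E(f_C) is contained in C and |E(f_C)| <= |C|.
   The theorem follows by taking a cover of minimum size (one exists since
   [n] itself is a cover) and combining (1) and (2). *)

Lemma is_min_nat_exists (P : nat -> Prop) (k : nat) :
  P k -> exists m, is_min_nat P m.
Proof.
  revert P. induction k as [k IH] using (well_founded_induction Wf_nat.lt_wf).
  intros P Hk.
  destruct (classic (exists j, (j < k)%nat /\ P j)) as [[j [Hj Pj]] | Hnone].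
  - exact (IH j Hj P Pj).
  - exists k; split; [exact Hk |].
    intros j Pj. destruct (Nat.le_gt_cases k j) as [Hkj | Hjk]; [exact Hkj |].
    exfalso; apply Hnone; eauto.
Qed.

Lemma Rmax_nonexpansive (a b c d K : R) :
  Rabs (a - c) <= K -> Rabs (b - d) <= K -> Rabs (Rmax a b - Rmax c d) <= K.
Proof.
  unfold Rmax, Rabs; repeat destruct Rle_dec; repeat destruct Rcase_abs; lra.
Qed.

Lemma lt_two_div_iff (L r : R) : 0 < L -> (r < 2 / L <-> L * r < 2).
Proof.
  intros HL. replace 2 with (L * (2 / L)) at 2 by (field; lra).
  split; intros H.
  - apply Rmult_lt_compat_l; assumption.
  - apply Rmult_lt_reg_l with L; assumption.
Qed.

Section LipschitzClassification.

Variables (X : Type) (rho : X -> X -> R).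
Hypothesis Hrho : is_metric rho.
Variables (L : R) (n : nat) (x : nat -> X) (y : nat -> R).
Hypothesis HL : 0 < L.

Definition error_list (f : X -> R) : list nat :=
  filter (fun i => if Rlt_dec (y i * f (x i)) 1 then true else false) (seq 0 n).

Lemma in_error_list (f : X -> R) (i : nat) :
  In i (error_list f) <-> (i < n)%nat /\ y i * f (x i) < 1.
Proof.
  unfold error_list; rewrite filter_In, in_seq.
  destruct Rlt_dec; split; intros H; intuition (try discriminate; lia).
Qed.

Lemma lipschitz_edge_error (f : X -> R) (i j : nat) :
  lipschitz_le rho L f -> GL_edge rho L x y i j ->
  y i * f (x i) < 1 \/ y j * f (x j) < 1.
Proof.
  intros Hf [Hyi [Hyj Hclose]].
  apply (lt_two_div_iff L _ HL) in Hclose.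
  rewrite Hyi, Hyj.
  destruct (Rlt_dec (f (x i)) 1) as [Hi | Hi]; [left; lra | right].
  pose proof (Hf (x i) (x j)) as Hlip.
  pose proof (Rle_abs (f (x i) - f (x j))). lra.
Qed.

Lemma error_list_cover (f : X -> R) :
  lipschitz_le rho L f -> is_vertex_cover rho L n x y (error_list f).
Proof.
  intros Hf. split; [| split].
  - apply NoDup_filter, seq_NoDup.
  - intros i Hi. apply in_error_list in Hi. tauto.
  - intros i j Hi Hj Hij.
    destruct (lipschitz_edge_error f i j Hf Hij) as [Ei | Ej].
    + left; apply in_error_list; auto.
    + right; apply in_error_list; auto.
Qed.

Lemma full_cover : is_vertex_cover rho L n x y (seq 0 n).
Proof.
  split; [apply seq_NoDup | split].
  - intros i Hi. apply in_seq in Hi. lia.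
  - intros i j Hi _ _. left. apply in_seq. lia.
Qed.

Definition bump (P : list nat) (z : X) : R :=
  fold_right (fun p acc => Rmax (1 - L * rho z (x p)) acc) (-1) P.

Lemma bump_lipschitz (P : list nat) : lipschitz_le rho L (bump P).
Proof.
  destruct Hrho as [Hpos [_ [Hsym Htri]]].
  intros z z'. induction P as [| p P IH]; simpl.
  - replace (-1 - -1) with 0 by ring. rewrite Rabs_R0.
    apply Rmult_le_pos; [lra | apply Hpos].
  - apply Rmax_nonexpansive; [| exact IH].
    assert (Hrev : Rabs (rho z' (x p) - rho z (x p)) <= rho z z').
    { pose proof (Htri z z' (x p)). pose proof (Htri z' z (x p)).
      rewrite (Hsym z' z) in *. unfold Rabs; destruct Rcase_abs; lra. }
    replace (1 - L * rho z (x p) - (1 - L * rho z' (x p)))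
      with (L * (rho z' (x p) - rho z (x p))) by ring.
    rewrite Rabs_mult, Rabs_pos_eq by lra.
    apply Rmult_le_compat_l; [lra | exact Hrev].
Qed.

Lemma bump_ge_one (P : list nat) (p : nat) : In p P -> 1 <= bump P (x p).
Proof.
  destruct Hrho as [_ [Hzero _]].
  induction P as [| q P IH]; simpl; [tauto |]. intros [<- | Hin].
  - rewrite (proj2 (Hzero _ _) eq_refl). eapply Rle_trans; [| apply Rmax_l]. lra.
  - eapply Rle_trans; [apply IH, Hin | apply Rmax_r].
Qed.

Lemma bump_le_minus_one (P : list nat) (z : X) :
  (forall p, In p P -> 2 <= L * rho z (x p)) -> bump P z <= -1.
Proof.
  induction P as [| q P IH]; simpl; intros Hfar; [lra |].
  apply Rmax_lub.
  - specialize (Hfar q (or_introl eq_refl)); lra.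
  - apply IH; auto.
Qed.

Hypothesis Hy : forall i, (i < n)%nat -> y i = 1 \/ y i = -1.

Definition uncovered_positives (C : list nat) : list nat :=
  filter (fun i => if Req_EM_T (y i) 1 then
                     if in_dec Nat.eq_dec i C then false else true
                   else false) (seq 0 n).

Lemma in_uncovered_positives (C : list nat) (p : nat) :
  In p (uncovered_positives C) <-> (p < n)%nat /\ y p = 1 /\ ~ In p C.
Proof.
  unfold uncovered_positives; rewrite filter_In, in_seq.
  destruct (Req_EM_T (y p) 1), (in_dec Nat.eq_dec p C); split; intros H; intuition (try discriminate; lia).
Qed.

Lemma cover_bump_errors_incl (C : list nat) :
  is_vertex_cover rho L n x y C ->
  incl (error_list (bump (uncovered_positives C))) C.
Proof.
  intros [_ [_ Hcover]] i Hi.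
  apply in_error_list in Hi as [Hin Herr].
  destruct (in_dec Nat.eq_dec i C) as [HiC | HiC]; [exact HiC | exfalso].
  destruct (Hy i Hin) as [Hpos | Hneg]; rewrite ?Hpos, ?Hneg in Herr.
  - assert (Hc : In i (uncovered_positives C)) by (apply in_uncovered_positives; auto).
    pose proof (bump_ge_one _ _ Hc). lra.
  - enough (bump (uncovered_positives C) (x i) <= -1) by lra.
    apply bump_le_minus_one. intros p Hp.
    apply in_uncovered_positives in Hp as [Hpn [Hyp HpC]].
    destruct Hrho as [_ [_ [Hsym _]]]. rewrite Hsym.
    apply Rnot_lt_le. intros Hclose.
    apply (lt_two_div_iff L _ HL) in Hclose.
    destruct (Hcover p i Hpn Hin (conj Hyp (conj Hneg Hclose))); tauto.
Qed.

Lemma cover_bump_errors_le (C : list nat) :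
  is_vertex_cover rho L n x y C ->
  (margin_errors n x y (bump (uncovered_positives C)) <= length C)%nat.
Proof.
  intros HC. unfold margin_errors; fold (error_list (bump (uncovered_positives C))).
  apply NoDup_incl_length.
  - apply NoDup_filter, seq_NoDup.
  - apply cover_bump_errors_incl, HC.
Qed.

End LipschitzClassification.

Theorem mainTheorem7 (X : Type) (rho : X -> X -> R) (Hrho : is_metric rho)
  (n : nat) (x : nat -> X) (y : nat -> R)
  (Hy : forall i, (i < n)%nat -> y i = 1 \/ y i = -1)
  (L : R) (HL : 0 < L) :
  exists m : nat,
    is_min_nat (fun k => exists f : X -> R,
                   lipschitz_le rho L f /\ margin_errors n x y f = k) m /\
    is_min_nat (fun k => exists C : list nat,
                   is_vertex_cover rho L n x y C /\ length C = k) m.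
Proof.
  set (IsCoverSize := fun k => exists C : list nat,
                         is_vertex_cover rho L n x y C /\ length C = k).
  assert (Hlower : forall f, lipschitz_le rho L f -> IsCoverSize (margin_errors n x y f))
    by (intros f Hf; exists (error_list X n x y f); split;
        [apply error_list_cover; assumption | reflexivity]).
  destruct (is_min_nat_exists IsCoverSize n) as [m Hmin].
  { exists (seq 0 n); split; [apply full_cover | apply length_seq]. }
  exists m; split; [| exact Hmin].
  destruct Hmin as [[C [HC HlenC]] Hleast].
  set (f := bump X rho L x (uncovered_positives n y C)).
  assert (Hf : lipschitz_le rho L f) by (apply bump_lipschitz; assumption).
  split.
  - exists f; split; [exact Hf |].
    apply Nat.le_antisymm.
    + rewrite <- HlenC. apply cover_bump_errors_le; assumption.
    + apply Hleast, Hlower, Hf.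
  - intros k [g [Hg <-]]. apply Hleast, Hlower, Hg.
Qed.
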